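(* Let $R$ and $B$ be disjoint finite sets of points in the plane such that no three points of $R\cup B$ are collinear, and let $f:R\to\{2,3,4,\ldots\}$ be a function. If $|B|=\sum_{x\in R}(f(x)-2)+2$, then there exists a non-crossing geometric spanning tree $T$ on $R\cup B$ such that the set of leaves of $T$ is exactly $B$ and $\deg_T(x)=f(x)$ for every $x\in R$.
   Context: A geometric spanning tree on a point set $P$ is a tree with vertex set $P$ whose edges are drawn as straight-line segments between their endpoints; it is non-crossing if no two edges intersect except at a common endpoint. $\deg_T(v)$ denotes the degree of vertex $v$ in $T$, and a leaf is a vertex of degree one. *)

From mathcomp Require Import all_boot all_order all_algebra.
From mathcomp Require Import reals.
Set Implicit Arguments. Unset Strict Implicit. Unset Printing Implicit Defensive.
Import Order.TTheory GRing.Theory Num.Theory.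
Local Open Scope ring_scope.

Section Geom.
Variable R : realType.
Definition point := (R * R)%type.

Definition orient (p q r : point) : R :=
  (q.1 - p.1) * (r.2 - p.2) - (q.2 - p.2) * (r.1 - p.1).

Definition collinear (p q r : point) : Prop := orient p q r = 0.

Definition on_segment (z p q : point) : Prop :=
  exists t : R, 0 <= t /\ t <= 1 /\
    z = ((1 - t) * p.1 + t * q.1, (1 - t) * p.2 + t * q.2).
End Geom.

Local Close Scope ring_scope.
Section Graph.
Variable V : finType.

Definition simple_graph (e : rel V) : Prop :=
  symmetric e /\ irreflexive e.

Definition deg (e : rel V) (v : V) : nat := #|[set w | e v w]|.

Definition is_tree (e : rel V) : Prop :=
  [/\ simple_graph e,
      (forall x y : V, connect e x y) &
      (forall c : seq V, (3 <= size c)%N -> ~~ ucycleb e c)].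

Definition non_crossing (R : realType) (pos : V -> point R) (e : rel V) : Prop :=
  forall a b c d : V, e a b -> e c d -> [set a; b] != [set c; d] ->
    forall z : point R, on_segment z (pos a) (pos b) -> on_segment z (pos c) (pos d) ->
      exists2 v : V, (v \in [set a; b]) && (v \in [set c; d]) & z = pos v.
End Graph.

From mathcomp Require Import all_boot all_order all_algebra.
From mathcomp Require Import reals.
From mathcomp Require Import ring lra zify.
Import Order.TTheory GRing.Theory Num.Theory.
Set Implicit Arguments. Unset Strict Implicit. Unset Printing Implicit Defensive.

(* Generalize: on any finite point set S in general position, every
   d : S -> nat with d > 0 (for |S| > 1) and sum 2(|S| - 1) is the degree sequence of
   a non-crossing spanning tree; the theorem takes d = f on R and d = 1 on B.  Take a leftmost point p and sort the others by angle around p as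
   q_0, ..., q_(n-1).  A discrete intermediate value argument on the prefix sums of
   the d (q_j) finds a line through p and some q_i cutting S into two smaller sets
   that share a single point (p or q_i) and whose degree sums, after splitting the
   degree of the shared point, are again 2(size - 1).  The trees given by induction
   lie in opposite closed half-planes, so their union is non-crossing, and it is a
   tree since the two parts meet in one vertex. *)

Section TreeOn.
Variable V : finType.
Implicit Types (S A B X : {set V}) (e : rel V) (c u v w : V).

Definition tree_on S e :=
  [/\ (forall u w, e u w -> (u \in S) && (w \in S)), symmetric e, irreflexive e,
      {in S &, forall x y, connect e x y} &
      (forall cy : seq V, 3 <= size cy -> ~~ ucycleb e cy)].

Lemma deg_notin S e v : tree_on S e -> v \notin S -> deg e v = 0.
Proof.
case=> e_in _ _ _ _ vS; apply/eqP; rewrite cards_eq0; apply/eqP/setP => w.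
by rewrite !inE; apply: contraNF vS => /e_in/andP[].
Qed.

Lemma mem_setI1 A B c : A :&: B = [set c] -> (c \in A) && (c \in B).
Proof. by move=> AIB; rewrite -in_setI AIB set11. Qed.

Lemma path_stays_in e X c :
    (forall u w, e u w -> u \in X -> u != c -> w \in X) ->
  forall u s, path e u s -> u \in X -> u != c -> c \notin s -> all (mem X) s.
Proof.
move=> closedX u s; elim: s u => [|v s IHs] u //= /andP[euv pv] uX uc.
rewrite inE negb_or eq_sym => /andP[vc cs].
have vX : v \in X by apply: closedX euv uX uc.
by rewrite vX (IHs v).
Qed.

Section Glue.
Variables (A B : {set V}) (c : V) (eA eB : rel V).
Hypotheses (AIB : A :&: B = [set c]) (tA : tree_on A eA) (tB : tree_on B eB).
Let e := [rel u w | eA u w || eB u w].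
Let side X := X = A \/ X = B.

Lemma glue_meet v : v \in A -> v \in B -> v = c.
Proof. by move=> vA vB; apply/set1P; rewrite -AIB inE vA vB. Qed.

Lemma glue_edge_side u w : e u w -> exists2 X, side X & (u \in X) && (w \in X).
Proof.
have [eA_in _ _ _ _] := tA; have [eB_in _ _ _ _] := tB.
by case/orP=> [/eA_in|/eB_in] uw; [exists A; first left | exists B; first right].
Qed.

Lemma glue_side_closed X : side X -> forall u w, e u w -> u \in X -> u != c -> w \in X.
Proof.
have [eA_in _ _ _ _] := tA; have [eB_in _ _ _ _] := tB.
move=> [->|->] u w /orP[/eA_in/andP[uA wA]|/eB_in/andP[uB wB]] uX //.
  by rewrite (glue_meet uX uB) eqxx.
by rewrite (glue_meet uA uX) eqxx.
Qed.

Lemma glue_cycle_side cy : cycle e cy -> uniq cy -> 3 <= size cy ->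
  exists2 X, side X & {subset cy <= X}.
Proof.
move=> cyc un sz; have [ccy | ncy] := boolP (c \in cy).
  have [i s' def_s'] := rot_to ccy.
  have := rot_cycle i e cy; rewrite cyc def_s' => cyc'.
  have := rot_uniq i cy; rewrite un def_s' => /andP[cs _].
  have := size_rot i cy; rewrite def_s' => sz'.
  case: s' def_s' sz' cyc' cs => [|v s] def_s' sz'; first by rewrite -sz' in sz.
  rewrite /= => /andP[ecv]; rewrite rcons_path => /andP[pvs _].
  rewrite inE negb_or eq_sym => /andP[vc cs].
  have [X sX /andP[cX vX]] := glue_edge_side ecv.
  have /allP sX' := path_stays_in (glue_side_closed sX) pvs vX vc cs.
  exists X => // x; rewrite -(mem_rot i) def_s' !inE => /or3P[/eqP->|/eqP->|/sX'] //.
case: cy cyc un sz ncy => [|u [|v s]] // cyc _ _; rewrite inE negb_or eq_sym.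
move=> /andP[uc cs]; have [X sX /andP[uX _]] := glue_edge_side (andP cyc).1.
have cs' : c \notin rcons (v :: s) u by rewrite mem_rcons inE negb_or eq_sym uc.
have /allP sX' := path_stays_in (glue_side_closed sX) cyc uX uc cs'.
by exists X => // x; rewrite -mem_rcons => /sX'.
Qed.

Lemma glue_tree_on : tree_on (A :|: B) e.
Proof.
have [eA_in symA irrA conA acA] := tA; have [eB_in symB irrB conB acB] := tB.
have /andP[cA cB] := mem_setI1 AIB.
have subA : {in A &, subrel e eA}.
  move=> u w uA wA /orP[//|euw]; have /andP[uB wB] := eB_in _ _ euw.
  by move: euw; rewrite (glue_meet uA uB) (glue_meet wA wB) irrB.
have subB : {in B &, subrel e eB}.
  move=> u w uB wB /orP[euw|//]; have /andP[uA wA] := eA_in _ _ euw.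
  by move: euw; rewrite (glue_meet uA uB) (glue_meet wA wB) irrA.
have conA' : {in A &, forall x y, connect e x y}.
  move=> x y xA yA; apply: connect_sub (conA x y xA yA) => u w euw.
  by apply/connect1/orP; left.
have conB' : {in B &, forall x y, connect e x y}.
  move=> x y xB yB; apply: connect_sub (conB x y xB yB) => u w euw.
  by apply/connect1/orP; right.
split.
- by move=> u w /orP[/eA_in|/eB_in] /andP[uX wX]; rewrite !inE uX wX ?orbT.
- by move=> u w /=; rewrite symA symB.
- by move=> u /=; rewrite irrA irrB.
- move=> x y; rewrite !inE => /orP[xA|xB] /orP[yA|yB]; first exact: conA'.
  + exact: connect_trans (conA' x c xA cA) (conB' c y cB yB).
  + exact: connect_trans (conB' x c xB cB) (conA' c y cA yA).
  + exact: conB'.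
- move=> cy sz; apply/negP => /andP[cyc un].
  have [X [->|->] /allP cyX] := glue_cycle_side cyc un sz.
    by move: (acA cy sz); rewrite /ucycleb (sub_in_cycle subA cyX cyc) un.
  by move: (acB cy sz); rewrite /ucycleb (sub_in_cycle subB cyX cyc) un.
Qed.

Lemma deg_glue v : deg e v = deg eA v + deg eB v.
Proof.
have [eA_in _ irrA _ _] := tA; have [eB_in _ _ _ _] := tB.
rewrite /deg -cardsUI; have -> : [set w | eA v w] :&: [set w | eB v w] = set0.
  apply/setP => w; rewrite !inE; apply/andP => -[evw /eB_in/andP[vB wB]].
  have /andP[vA wA] := eA_in _ _ evw.
  by move: evw; rewrite (glue_meet vA vB) (glue_meet wA wB) irrA.
by rewrite cards0 addn0; apply: eq_card => w; rewrite !inE.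
Qed.

End Glue.
End TreeOn.

Section Orientation.
Local Open Scope ring_scope.
Variable R : realType.
Implicit Types (P Q X Y Z z : point R) (t : R).

Lemma orient_swap P Q X : orient P X Q = - orient P Q X.
Proof. by rewrite /orient; ring. Qed.

Lemma orient_rot P Q X : orient Q X P = orient P Q X.
Proof. by rewrite /orient; ring. Qed.

Lemma orient_xyx P Q : orient P Q P = 0.
Proof. by rewrite /orient; ring. Qed.

Lemma orient_xyy P Q : orient P Q Q = 0.
Proof. by rewrite /orient; ring. Qed.

Lemma orient_on_segment X Y z : on_segment z X Y -> orient X Y z = 0.
Proof. by case=> t [_ [_ ->]]; rewrite /orient /=; ring. Qed.

Lemma on_segment_sym X Y z : on_segment z X Y -> on_segment z Y X.
Proof.
case=> t [t0 [t1 ->]]; exists (1 - t).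
split; [|split]; [lra | lra | congr (_, _); ring].
Qed.

Lemma orient_segment P Q X Y t :
  orient P Q ((1 - t) * X.1 + t * Y.1, (1 - t) * X.2 + t * Y.2) =
  (1 - t) * orient P Q X + t * orient P Q Y.
Proof. by rewrite /orient /=; ring. Qed.

Lemma orient_segment_le0 P Q X Y z : on_segment z X Y ->
  orient P Q X <= 0 -> orient P Q Y <= 0 -> orient P Q z <= 0.
Proof.
case=> t [t0 [t1 ->]]; rewrite orient_segment => hX hY.
by rewrite -oppr_ge0 opprD -!mulrN addr_ge0 // mulr_ge0 ?oppr_ge0 ?subr_ge0.
Qed.

Lemma segment_crossing_end P Q X Y z : on_segment z X Y -> orient P Q z <= 0 ->
  0 <= orient P Q X -> 0 < orient P Q Y -> z = X.
Proof.
case=> t [t0 [t1 ->]]; rewrite orient_segment => hz hX hY.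
have -> : t = 0 by apply/eqP; rewrite eq_le t0 andbT; nra.
by rewrite subr0 !mul1r !mul0r !addr0; case: X {hX hz}.
Qed.

Lemma orient_trans_right P X Y Z : P.1 <= X.1 -> P.1 <= Y.1 -> P.1 <= Z.1 ->
  0 < orient P X Y -> 0 < orient P Y Z -> 0 <= orient P X Z.
Proof.
rewrite /orient -[P.1 <= X.1]subr_ge0 -[P.1 <= Y.1]subr_ge0 -[P.1 <= Z.1]subr_ge0.
move: (X.1 - P.1) (Y.1 - P.1) (Z.1 - P.1) (X.2 - P.2) (Y.2 - P.2) (Z.2 - P.2).
move=> x1 y1 z1 x2 y2 z2 hx hy hz ha hb; rewrite leNgt; apply/negP => hg.
have t1 : 0 <= (x1 * y2 - x2 * y1) * z1 by rewrite mulr_ge0 // ltW.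
have t2 : 0 <= (y1 * z2 - y2 * z1) * x1 by rewrite mulr_ge0 // ltW.
have t3 : 0 <= - (x1 * z2 - x2 * z1) * y1 by rewrite mulr_ge0 // oppr_ge0 ltW.
have id : (x1 * y2 - x2 * y1) * z1 + (y1 * z2 - y2 * z1) * x1 =
          (x1 * z2 - x2 * z1) * y1 by ring.
have /eqP : (y1 * z2 - y2 * z1) * x1 = 0 by lra.
rewrite mulf_eq0 (gt_eqF hb) /= => /eqP x0.
have /eqP : - (x1 * z2 - x2 * z1) * y1 = 0 by lra.
rewrite mulf_eq0 oppr_eq0 (lt_eqF hg) /= => /eqP y0.
by move: ha; rewrite x0 y0 !(mul0r, mulr0) subrr ltxx.
Qed.

End Orientation.

Section Separation.
Local Open Scope ring_scope.
Variables (R : realType) (V : finType) (pos : V -> point R).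
Hypothesis gp : forall u v w : V, u != v -> v != w -> u != w ->
  ~ collinear (pos u) (pos v) (pos w).
Implicit Types (A B : {set V}) (P Q : point R).

Lemma vertex_on_segment a a' x : a != a' ->
  on_segment (pos x) (pos a) (pos a') -> x \in [set a; a'].
Proof.
move=> aa' /orient_on_segment xaa'; rewrite !inE; apply/negPn/negP.
rewrite negb_or => /andP[xa xa'].
by apply: (gp aa' (_ : a' != x) (_ : a != x)) => //; rewrite eq_sym.
Qed.

Definition separates P Q A B c :=
  [/\ {in A, forall a, orient P Q (pos a) <= 0},
      {in B, forall b, b != c -> 0 < orient P Q (pos b)} &
      orient P Q (pos c) = 0].

Lemma separated_segments_meet P Q A B c a a' b b' z : separates P Q A B c ->
  a \in A -> a' \in A -> b \in B -> b' \in B -> b != b' ->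
  on_segment z (pos a) (pos a') -> on_segment z (pos b) (pos b') ->
  z = pos c /\ c \in [set b; b'].
Proof.
move=> [hA hB hc] aA a'A; wlog b'c : b b' / b' != c => [wlog_b'c|] bB b'B bb' za zb.
  have [eb'c|b'c] := eqVneq b' c; last exact: wlog_b'c.
  rewrite setUC; apply: wlog_b'c (on_segment_sym zb) => //; last by rewrite eq_sym.
  by rewrite -eb'c.
have hz := orient_segment_le0 za (hA a aA) (hA a' a'A).
have hb : 0 <= orient P Q (pos b).
  by have [->|bc] := eqVneq b c; [rewrite hc | exact/ltW/hB].
have zb' := segment_crossing_end zb hz hb (hB b' b'B b'c); subst z.
have [bc|bc] := eqVneq b c; first by rewrite bc !inE eqxx.
by move: hz; rewrite leNgt hB.
Qed.

Lemma non_crossing_glue P Q A B c eA eB : separates P Q A B c ->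
  tree_on A eA -> tree_on B eB -> non_crossing pos eA -> non_crossing pos eB ->
  non_crossing pos [rel u w | eA u w || eB u w].
Proof.
move=> sep [eA_in _ irrA _ _] [eB_in _ irrB _ _] ncA ncB.
have ne (e : rel V) u w : irreflexive e -> e u w -> u != w.
  by move=> irr; apply: contraTneq => ->; rewrite irr.
move=> a b x y /orP[eab|eab] /orP[exy|exy] abxy z zab zxy.
- exact: ncA eab exy abxy z zab zxy.
- have /andP[aA bA] := eA_in _ _ eab; have /andP[xB yB] := eB_in _ _ exy.
  have [zc cxy] := separated_segments_meet sep aA bA xB yB (ne _ _ _ irrB exy) zab zxy.
  exists c => //; rewrite cxy andbT vertex_on_segment ?(ne _ _ _ irrA eab) //.
  by rewrite -zc.
- have /andP[aB bB] := eB_in _ _ eab; have /andP[xA yA] := eA_in _ _ exy.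
  have [zc cab] := separated_segments_meet sep xA yA aB bB (ne _ _ _ irrB eab) zxy zab.
  exists c => //; rewrite cab vertex_on_segment ?(ne _ _ _ irrA exy) //.
  by rewrite -zc.
- exact: ncB eab exy abxy z zab zxy.
Qed.

End Separation.

Section Realizable.
Variables (R : realType) (V : finType) (pos : V -> point R).
Hypothesis gp : forall u v w : V, u != v -> v != w -> u != w ->
  ~ collinear (pos u) (pos v) (pos w).
Implicit Types (S A B : {set V}) (P Q : point R) (d : V -> nat).

Definition realizable S d := exists e : rel V,
  [/\ tree_on S e, non_crossing pos e & {in S, forall v, deg e v = d v}].

Lemma realizable_glue P Q A B c (d dA dB : V -> nat) :
  A :&: B = [set c] -> separates pos P Q A B c ->
  realizable A dA -> realizable B dB -> d c = dA c + dB c ->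
  {in A, forall v, v != c -> d v = dA v} -> {in B, forall v, v != c -> d v = dB v} ->
  realizable (A :|: B) d.
Proof.
move=> AIB sep [eA [tA ncA degA]] [eB [tB ncB degB]] dc dAv dBv.
have /andP[cA cB] := mem_setI1 AIB.
exists [rel u w | eA u w || eB u w]; split.
- exact: (glue_tree_on AIB tA tB).
- exact: non_crossing_glue sep tA tB ncA ncB.
move=> v; rewrite (deg_glue AIB tA tB) inE.
have [-> _|vc] := eqVneq v c; first by rewrite degA ?degB.
case/orP=> [vA|vB].
  have vB : v \notin B by apply: contra vc => vB; rewrite (glue_meet AIB vA vB).
  by rewrite degA // (deg_notin tB vB) addn0 dAv.
have vA : v \notin A by apply: contra vc => vA; rewrite (glue_meet AIB vA vB).
by rewrite degB // (deg_notin tA vA) dBv.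
Qed.

(* A single vertex has degree 0, hence positivity is only required when |S| > 1. *)
Definition tree_degrees S d := [/\ 0 < #|S|, \sum_(v in S) d v = (#|S|.-1).*2 &
  1 < #|S| -> {in S, forall v, 0 < d v}].

Definition realizable_below n :=
  forall S d, #|S| < n -> tree_degrees S d -> realizable S d.

Lemma realizable_split S A B c P Q d x : realizable_below #|S| ->
  A :|: B = S -> A :&: B = [set c] -> 1 < #|A| -> 1 < #|B| ->
  separates pos P Q A B c -> tree_degrees S d -> 0 < x < d c ->
  \sum_(v in A) (if v == c then x else d v) = (#|A|.-1).*2 ->
  realizable S d.
Proof.
move=> IH AB AIB A1 B1 sep [_ sumS posS] /andP[x0 xc] sumA.
have /andP[cA cB] := mem_setI1 AIB.
have SAE : S :\: A = B :\ c.
  apply/setP => v; rewrite -AB !inE; have [->|vc] := eqVneq v c; first by rewrite cA.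
  have [vA|//] := boolP (v \in A); apply/esym/negP => vB.
  by rewrite (glue_meet AIB vA vB) eqxx in vc.
have AS : A \subset S by rewrite -AB subsetUl.
have sum_split F : \sum_(v in S) F v = \sum_(v in A) F v + \sum_(v in B :\ c) F v.
  by rewrite (big_setID A) (setIidPr AS) SAE.
have cardS : #|S| = #|A| + #|B :\ c| by rewrite -!sum1_card sum_split.
have cardB : #|B| = (#|B :\ c|).+1 by rewrite (cardsD1 c B) cB.
have {}posS : {in S, forall v, 0 < d v} by apply: posS; lia.
have posB v : v \in B -> 0 < d v by move=> vB; apply: posS; rewrite -AB inE vB orbT.
have drop_c y X :
    \sum_(v in X :\ c) (if v == c then y else d v) = \sum_(v in X :\ c) d v.
  by apply: eq_bigr => v; rewrite !inE => /andP[/negPf ->].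
set dA := fun v => if v == c then x else d v.
set dB := fun v => if v == c then d c - x else d v.
rewrite -AB; apply: (realizable_glue (dA := dA) (dB := dB) AIB sep).
- apply: IH; first lia; split; [lia | exact: sumA | move=> _ v vA].
  by rewrite /dA; case: eqP => // _; apply: posS; rewrite -AB inE vA.
- apply: IH; first lia; split; [lia | | move=> _ v vB].
    rewrite (big_setD1 c cB) /= {1}/dB eqxx drop_c.
    move: sumA sumS; rewrite sum_split !(big_setD1 c cA) /= eqxx drop_c cardS cardB.
    rewrite -!muln2; lia.
  by rewrite /dB; case: eqP => _; [rewrite subn_gt0 | apply: posB].
- by rewrite /dA /dB !eqxx subnKC // ltnW.
- by move=> v _ vc; rewrite /dA (negbTE vc).
- by move=> v _ vc; rewrite /dB (negbTE vc).
Qed.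

End Realizable.

Lemma exists_flip (P : pred nat) a b : a <= b -> P a -> ~~ P b ->
  exists2 k, (a <= k < b) & P k && ~~ P k.+1.
Proof.
elim: b => [|b IHb]; first by rewrite leqn0 => /eqP-> ->.
rewrite leq_eqVlt ltnS => /predU1P[-> -> //|le_ab Pa nPb].
have [Pb|nPb'] := boolP (P b); first by exists b; rewrite ?le_ab ?ltnSn ?Pb.
have [k /andP[ak kb] Pk] := IHb le_ab Pa nPb'.
by exists k => //; rewrite ak ltnS ltnW.
Qed.

Section Leftmost.
Variables (R : realType) (V : finType) (pos : V -> point R).
Hypothesis gp : forall u v w : V, u != v -> v != w -> u != w ->
  ~ collinear (pos u) (pos v) (pos w).
Variables (S : {set V}) (p : V).
Hypotheses (pS : p \in S) (pmin : {in S, forall v, (pos p).1 <= (pos v).1}%R).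

Let S' := S :\ p.
Let angle_le : rel V := fun a b => (0 <= orient (pos p) (pos a) (pos b))%R.
Let s := sort angle_le (enum S').
Let n := #|S'|.
Let q i := nth p s i.
Let pre k := [set y in S' | index y s < k].

Let mem_s y : (y \in s) = (y \in S').
Proof. by rewrite mem_sort mem_enum. Qed.

Let size_s : size s = n.
Proof. by rewrite size_sort -cardE. Qed.

Let uniq_s : uniq s.
Proof. by rewrite sort_uniq enum_uniq. Qed.

Lemma orient_leftmost_neq0 a b : a \in S' -> b \in S' -> a != b ->
  orient (pos p) (pos a) (pos b) != 0%R.
Proof.
rewrite !inE => /andP[ap _] /andP[bp _] ab; apply/eqP => abp.
by apply: (gp (_ : p != a) ab (_ : p != b)); rewrite 1?eq_sym.
Qed.

Lemma angle_le_trans : {in S' & &, transitive angle_le}.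
Proof.
move=> b a c bS aS cS; rewrite /angle_le => hab hbc.
have [->//|ab] := eqVneq a b; have [<-//|bc] := eqVneq b c.
have [->|ac] := eqVneq a c; first by rewrite orient_xyy.
have left_of v : v \in S' -> ((pos p).1 <= (pos v).1)%R by rewrite inE => /andP[_ /pmin].
apply: orient_trans_right (left_of a aS) (left_of b bS) (left_of c cS) _ _.
  by rewrite lt_def orient_leftmost_neq0.
by rewrite lt_def orient_leftmost_neq0.
Qed.

Lemma orient_sorted x y : x \in S' -> y \in S' -> index x s < index y s ->
  (0 < orient (pos p) (pos x) (pos y))%R.
Proof.
move=> xS yS lt_xy; rewrite lt_def orient_leftmost_neq0 //=; last first.
  by apply: contraTneq lt_xy => ->; rewrite ltnn.
have angle_le_total : total angle_le.
  by move=> a b; rewrite /angle_le orient_swap oppr_ge0 le_total.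
have angle_le_trans_s : {in s & &, transitive angle_le}.
  by move=> b a c; rewrite !mem_s; apply: angle_le_trans.
apply: (sorted_ltn_index_in angle_le_trans_s (sort_sorted angle_le_total _)) => //.
all: by rewrite mem_s.
Qed.

Lemma q_in i : i < n -> q i \in S'.
Proof. by move=> lt_in; rewrite -mem_s mem_nth ?size_s. Qed.

Lemma index_q i : i < n -> index (q i) s = i.
Proof. by move=> lt_in; rewrite index_uniq ?size_s ?uniq_s. Qed.

Lemma q_index y : y \in S' -> q (index y s) = y.
Proof. by rewrite -mem_s; apply: nth_index. Qed.

Lemma index_lt y : y \in S' -> index y s < n.
Proof. by rewrite -mem_s -index_mem size_s. Qed.

Lemma in_pre y k : (y \in pre k) = (y \in S') && (index y s < k).
Proof. by rewrite inE. Qed.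

Lemma p_notin_pre k : p \notin pre k.
Proof. by rewrite in_pre !inE eqxx. Qed.

Lemma pre_sub k : pre k \subset S'.
Proof. by apply/subsetP => y; rewrite in_pre => /andP[]. Qed.

Lemma q_notin_pre k : k < n -> q k \notin pre k.
Proof. by move=> lt_kn; rewrite in_pre index_q // ltnn andbF. Qed.

Lemma preS k : k < n -> pre k.+1 = q k |: pre k.
Proof.
move=> lt_kn; apply/setP => y; rewrite in_setU1 !in_pre ltnS leq_eqVlt.
have [->|yq] := eqVneq y (q k); first by rewrite q_in // index_q // eqxx.
case: (boolP (y \in S')) => //= yS; rewrite (_ : (index y s == k) = false) //.
by apply: contraNF yq => /eqP <-; rewrite q_index.
Qed.

Lemma pre0 : pre 0 = set0.
Proof. by apply/setP => y; rewrite in_pre andbF inE. Qed.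

Lemma card_pre k : k <= n -> #|pre k| = k.
Proof.
elim: k => [_|k IHk lt_kn]; first by rewrite pre0 cards0.
by rewrite preS // cardsU1 q_notin_pre // IHk // ltnW.
Qed.

Lemma pre_n : pre n = S'.
Proof. by apply/setP => y; rewrite in_pre andb_idr // => /index_lt. Qed.

Lemma eq_q y i : i < n -> (y == q i) = (y \in S') && (index y s == i).
Proof.
move=> lt_in; have [yS|yS] := boolP (y \in S'); last first.
  by apply: contraNF yS => /eqP ->; apply: q_in.
by apply/eqP/eqP => [->|<-]; rewrite ?index_q ?q_index.
Qed.

Lemma orient_pre_le0 i a : i < n -> a \in p |: pre i.+1 ->
  (orient (pos p) (pos (q i)) (pos a) <= 0)%R.
Proof.
move=> lt_in; rewrite in_setU1 => /predU1P[->|]; first by rewrite orient_xyx.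
rewrite preS // in_setU1 => /predU1P[->|]; first by rewrite orient_xyy.
rewrite in_pre => /andP[aS lt_ai].
by rewrite orient_swap oppr_le0 ltW // orient_sorted ?q_in ?index_q.
Qed.

Lemma orient_post_gt0 i b : i < n -> b \in S' :\: pre i.+1 ->
  (0 < orient (pos p) (pos (q i)) (pos b))%R.
Proof.
move=> lt_in /setDP[bS]; rewrite in_pre bS /= -leqNgt => le_ib.
by apply: orient_sorted; rewrite ?q_in ?index_q.
Qed.

Variable d : V -> nat.
Hypotheses (IH : realizable_below pos #|S|) (degS : tree_degrees S d).
Local Notation Ps k := (\sum_(v in pre k) d v).

Lemma card_S : #|S| = n.+1.
Proof. by rewrite (cardsD1 p S) pS. Qed.

Lemma PsS k : k < n -> Ps k.+1 = Ps k + d (q k).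
Proof. by move=> lt_kn; rewrite preS // big_setU1 ?q_notin_pre //= addnC. Qed.

Lemma Ps_total : d p + Ps n = n.*2.
Proof. by have [_] := degS; rewrite (big_setD1 p pS) card_S pre_n => -> _. Qed.

Lemma card_S'_pre k : k <= n -> #|S' :\: pre k| = n - k.
Proof. by move=> le_kn; rewrite cardsD (setIidPr (pre_sub k)) card_pre. Qed.

(* Both parts contain p, which has degree 1 in the part p, q_0, ..., q_(k-1);
   the line p q_(k-1) separates them. *)
Lemma case_apex k : 0 < k < n -> 1 < d p -> (Ps k).+1 = k.*2 ->
  realizable pos S d.
Proof.
move=> /andP[k0 kn] dp hk; have lt_k1n : k.-1 < n by lia.
have cardA : #|p |: pre k| = k.+1.
  by rewrite cardsU1 p_notin_pre (card_pre (ltnW kn)).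
have prek : pre k = pre k.-1.+1 by rewrite prednK.
have p_notin_post : p \notin S' :\: pre k by rewrite !inE eqxx.
apply: (realizable_split gp (A := p |: pre k) (B := p |: (S' :\: pre k)) (c := p)
          (P := pos p) (Q := pos (q k.-1)) (x := 1) IH) => //.
- by rewrite setUACA setUid -{1}(setIidPr (pre_sub k)) setID setD1K.
- by rewrite -setUIr setDE setICA setICr setI0 setU0.
- by rewrite cardA.
- by rewrite cardsU1 p_notin_post (card_S'_pre (ltnW kn)) /=; lia.
- split; last exact: orient_xyx.
    by move=> a; rewrite prek; apply: orient_pre_le0.
  move=> b; rewrite in_setU1 => /predU1P[-> /eqP //|bpost _].
  by apply: orient_post_gt0 => //; rewrite -prek.
- rewrite cardA big_setU1 ?p_notin_pre //= eqxx (eq_bigr d) -?hk // => v vpre.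
  by rewrite ifF //; apply: contraNF (p_notin_pre k) => /eqP <-.
Qed.

(* The parts p, q_0, ..., q_i and q_i, ..., q_(n-1) share q_i and are separated
   by the line p q_i. *)
Lemma case_hinge i : i.+2 <= n -> d p = 1 -> Ps i <= i.*2 ->
  i.*2.+2 <= Ps i + d (q i) -> realizable pos S d.
Proof.
move=> lt_i2n dp1 lo hi; have lt_in : i < n by lia.
have preSi := preS lt_in; have qS := q_in lt_in.
have pq : p != q i by apply: contraTneq qS => <-; rewrite !inE eqxx.
have cardA : #|p |: pre i.+1| = i.+2 by rewrite cardsU1 p_notin_pre (card_pre lt_in).
apply: (realizable_split gp (A := p |: pre i.+1) (B := S' :\: pre i) (c := q i)
          (P := pos p) (Q := pos (q i)) (x := (i.*2.+1 - Ps i)) IH) => //.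
- rewrite preSi -!setUA -{1}(setIidPr (pre_sub i)) setID.
  by rewrite [q i |: _](setUidPr _) ?sub1set // setD1K.
- apply/setP => y; rewrite in_setI in_setU1 in_setD !in_pre in_set1 (eq_q _ lt_in).
  have [->|yp] := eqVneq y p; first by rewrite !inE eqxx.
  by case: (y \in S') => //=; lia.
- by rewrite cardA.
- by rewrite (card_S'_pre (ltnW lt_in)); lia.
- split; [by move=> a; apply: orient_pre_le0 | | exact: orient_xyy].
  move=> b /setDP[bS bpre] bq; apply: orient_post_gt0 => //.
  by apply/setDP; split; rewrite // preSi in_setU1 negb_or bq.
- by apply/andP; split; lia.
- rewrite cardA big_setU1 ?p_notin_pre //= (negPf pq) preSi big_setU1 ?q_notin_pre //=.
  set x := (i.*2.+1 - _); rewrite eqxx (eq_bigr d) => [|v vpre]; first lia.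
  by rewrite ifN //; apply: contraNneq (q_notin_pre lt_in) => <-.
Qed.

(* p becomes a leaf hanging from q_(n-1): as p q_(n-1) is a convex hull edge, all
   the other points lie strictly on one side of it. *)
Lemma case_leaf : 1 < n -> d p = 1 -> 1 < d (q n.-1) -> realizable pos S d.
Proof.
move=> n1 dp1 dq; set q' := q n.-1; have lt_n1n : n.-1 < n by lia.
have qS : q' \in S' := q_in lt_n1n.
have pS' : p \notin S' by rewrite !inE eqxx.
have pq : p != q' by apply: contraNneq pS' => ->.
apply: (realizable_split gp (A := [set p; q']) (B := S') (c := q')
          (P := pos q') (Q := pos p) (x := 1) IH) => //.
- by rewrite -setUA [q' |: _](setUidPr _) ?sub1set // setD1K.
- apply/setP => y; rewrite in_setI in_set2 in_set1.
  have [->|yq] := eqVneq y q'; first by rewrite qS orbT.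
  by rewrite orbF; apply/negbTE; apply: contraNN pS' => /andP[/eqP <-].
- by rewrite cards2 pq.
- split; last exact: orient_xyx.
    by move=> a; rewrite in_set2 => /orP[]/eqP->; rewrite ?orient_xyy ?orient_xyx.
  move=> b bS bq; rewrite -orient_rot; apply: orient_sorted; rewrite // index_q //.
  have : index b s != n.-1 by apply: contra bq => /eqP ib; rewrite /q' -ib q_index.
  by have := index_lt bS; lia.
- by rewrite cards2 pq big_setU1 ?in_set1 //= big_set1 eqxx (negPf pq) dp1.
Qed.

Lemma realizable_leftmost_split : 2 < #|S| -> realizable pos S d.
Proof.
move=> S3; have n2 : 1 < n by move: S3; rewrite card_S.
have [_ _ /(_ (ltnW S3)) posS] := degS.
have posq j : j < n -> 0 < d (q j).
  by move=> lt_jn; apply/posS/(subsetP (subD1set S p))/q_in.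
have tot := Ps_total.
have [dp2|dp1] := ltnP 1 (d p).
  (* k.*2 <= (Ps k).+1 holds at 0 and fails at n, where Ps n = n.*2 - d p;
     where it flips, Ps k = k.*2 - 1. *)
  have [k /andP[_ kn] /andP[Qk nQk]] :=
    @exists_flip (fun k => k.*2 <= (Ps k).+1) 0 n (leq0n n)
      ltac:(by rewrite /= pre0 big_set0) ltac:(by rewrite /= -ltnNge; lia).
  move: nQk; rewrite /= PsS // -ltnNge => nQk; have := posq k kn => Dk.
  by apply: (@case_apex k) => //; [apply/andP; split | ]; lia.
have {}dp1 : d p = 1 by have := posS p pS; lia.
have [d0|d0] := ltnP 1 (d (q 0)).
  by apply: (@case_hinge 0) => //=; rewrite pre0 big_set0.
have [dn|dn] := ltnP 1 (d (q n.-1)); first exact: case_leaf n2 dp1 dn.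
have Ps1 : Ps 1 = 1.
  by rewrite (PsS (ltnW n2)) pre0 big_set0; have := posq 0 (ltnW n2); lia.
have lt_n1n : n.-1 < n by lia.
have Psn : Ps n = Ps n.-1 + d (q n.-1) by rewrite -PsS // prednK // ltnW.
have Dn1 := posq _ lt_n1n; have n21 : n.-2.+1 = n.-1 by lia.
(* Ps j.+1 < j.+1.*2 holds at 0 and fails at n.-2, as d (q 0) = d (q n.-1) = 1 and
   Ps n = n.*2 - 1; where it flips, the hinge at q_(k+1) applies. *)
have [k /andP[_ kn] /andP[Qk nQk]] :=
  @exists_flip (fun j => Ps j.+1 < j.+1.*2) 0 n.-2 (leq0n _)
    ltac:(by rewrite /= Ps1) ltac:(by rewrite /= n21 -leqNgt; lia).
have Dk1 := posq k.+1 ltac:(lia).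
move: nQk; rewrite /= (PsS (_ : k.+1 < n)) -?leqNgt => [nQk|]; last lia.
by apply: (@case_hinge k.+1) => //; lia.
Qed.

End Leftmost.

Section Induction.
Variables (R : realType) (V : finType) (pos : V -> point R).
Hypothesis gp : forall u v w : V, u != v -> v != w -> u != w ->
  ~ collinear (pos u) (pos v) (pos w).

Lemma realizable_singleton v (d : V -> nat) : d v = 0 -> realizable pos [set v] d.
Proof.
move=> dv; exists [rel _ _ | false]; split => //.
- split=> //; last by move=> [|x [|y cy]].
  by move=> x y /set1P-> /set1P->; apply: connect0.
- by move=> w /set1P->; rewrite dv /deg; apply/eqP; rewrite cards_eq0; apply/eqP/setP.
Qed.

Lemma realizable_edge a b (d : V -> nat) : a != b -> d a = 1 -> d b = 1 ->
  realizable pos [set a; b] d.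
Proof.
move=> ab da db; set e := [rel u w | (u != w) && ([set u; w] == [set a; b])].
have e_in u w : e u w -> (u \in [set a; b]) && (w \in [set a; b]).
  by case/andP=> _ /eqP <-; rewrite !inE !eqxx orbT.
have eab : e a b by rewrite /= ab eqxx.
have eba : e b a by rewrite /= eq_sym ab setUC eqxx.
have deg1 u w : e u w -> deg e u = 1.
  case/andP=> uw /eqP uwab; rewrite /deg -(cards1 w); apply: eq_card => x.
  rewrite !inE /e /= -uwab; apply/idP/eqP => [/andP[ux /eqP uxw]|->].
    have : x \in [set u; w] by rewrite -uxw !inE eqxx orbT.
    by rewrite !inE eq_sym (negPf ux) => /eqP.
  by rewrite uw eqxx.
exists e; split.
- split=> //.
  + by move=> u w /=; rewrite eq_sym setUC.
  + by move=> u; rewrite /= eqxx.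
  + move=> x y /set2P[]-> /set2P[]->; rewrite ?connect0 //; exact: connect1.
  + move=> cy sz; apply/negP => /andP[cyc un].
    have sub : {subset cy <= [:: a; b]}.
      by move=> x /(next_cycle cyc)/e_in/andP[]; rewrite !inE.
    by have := uniq_leq_size un sub; rewrite leqNgt (leq_trans _ sz).
- by move=> u w x y /andP[_ /eqP->] /andP[_ /eqP->]; rewrite eqxx.
- by move=> v /set2P[]->; [rewrite da (deg1 _ _ eab) | rewrite db (deg1 _ _ eba)].
Qed.

Lemma tree_degrees_realizable S d : tree_degrees S d -> realizable pos S d.
Proof.
have [m] := ubnP #|S|; elim: m => // m IHm in S d *; rewrite ltnS => leSm degS.
have IH : realizable_below pos #|S|.
  by move=> S' d' ltS'; apply: IHm; apply: leq_trans leSm.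
have [S0 sumS posS] := degS.
have [S3|] := ltnP 2 #|S|.
  have [p0 p0S] := card_gt0P S0.
  have [p pS pmin] := arg_minP (fun v => (pos v).1) p0S.
  exact: (realizable_leftmost_split gp pS _ IH degS S3).
move=> S2; have [S1|{}S2] : #|S| = 1 \/ #|S| = 2 by lia.
  have /eqP/cards1P[v SE] := S1; rewrite SE; apply: realizable_singleton.
  by move: sumS; rewrite SE big_set1 cards1.
have /eqP/cards2P[a [b [ab SE]]] := S2; have {}posS := posS ltac:(lia).
move: sumS (posS a) (posS b); rewrite SE big_setU1 ?big_set1 ?inE //= cards2 ab !eqxx orbT.
by move=> dab da db; apply: realizable_edge => //; lia.
Qed.

End Induction.

Lemma tree_degrees_leaves (V : finType) (Rs : {set V}) (f : V -> nat) :
  {in Rs, forall x, 2 <= f x} -> #|~: Rs| = \sum_(x in Rs) (f x - 2) + 2 ->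
  tree_degrees [set: V] (fun v => if v \in Rs then f v else 1).
Proof.
move=> f2 hB; have cardV : #|[set: V]| = #|Rs| + #|~: Rs| by rewrite cardsT -(cardsC Rs).
have sum_f : \sum_(x in Rs) f x = \sum_(x in Rs) (f x - 2) + #|Rs| * 2.
  by rewrite -sum_nat_const -big_split; apply: eq_bigr => x /f2 f2x /=; rewrite subnK.
split.
- by rewrite cardV hB; lia.
- rewrite (big_setID Rs) setTI setTD cardV /=.
  rewrite (eq_bigr f) => [|x xR]; last by rewrite xR.
  rewrite [X in _ + X](eq_bigr (fun=> 1)) => [|x]; last by rewrite inE => /negPf->.
  by rewrite sum1_card sum_f hB; lia.
- by move=> _ v _; case: ifP => // /f2; lia.
Qed.

Local Open Scope ring_scope.

Theorem proposition4 (R : realType) (V : finType) (pos : V -> point R)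
    (Rs : {set V}) (f : V -> nat) :
  injective pos ->
  (forall u v w : V, u != v -> v != w -> u != w -> ~ collinear (pos u) (pos v) (pos w)) ->
  (forall x : V, x \in Rs -> (2 <= f x)%N) ->
  #|~: Rs| = (\sum_(x in Rs) (f x - 2) + 2)%N ->
  exists e : rel V,
    [/\ is_tree e, non_crossing pos e,
        [set v | deg e v == 1%N] = ~: Rs &
        (forall x : V, x \in Rs -> deg e x = f x)].
Proof.
move=> _ gp f2 hB.
have [e [[_ sym irr con acyc] nc degE]] :=
  tree_degrees_realizable gp (tree_degrees_leaves f2 hB).
exists e; split=> //.
- by split=> // x y; apply: con.
- apply/setP => v; rewrite !inE degE ?inE //.
  by case: ifP => // /f2; case: (f v) => [|[|k]].
- by move=> x xR; rewrite degE ?inE // xR.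
Qed.
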